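(* Let $P_+$ denote the group of piecewise linear homeomorphisms $f:\mathbb{R}\to\mathbb{R}$ such that $f(0)=0$, the set of slopes of $f$ is bounded, and $f$ is the identity near $-\infty$. Let $f\in P_+$ with $\sup_{t\in\mathbb{R}}|f(t)-t|=\infty$. Then there exists a strictly monotone divergent sequence $\{b_n\}$ of real numbers such that at least one of the following holds: (1) $b_n\to+\infty$, $b_{n+1}>3f(b_n)$ for all $n$, and $f(b_n)-b_n\to+\infty$; (2) $b_n\to+\infty$, $b_{n+1}>3f^{-1}(b_n)$ for all $n$, and $f^{-1}(b_n)-b_n\to+\infty$.
   Context: For a piecewise linear homeomorphism $f$ of $\mathbb{R}$, its set of slopes is $\Lambda(f)=\{f'(t): t\in\mathbb{R}\setminus B(f)\}$, where $B(f)$ is the set of break points (points where $f$ is not differentiable). A set $\Lambda\subset\mathbb{R}\setminus\{0\}$ is bounded if there is $M>1$ with $M^{-1}<|\lambda|<M$ for all $\lambda\in\Lambda$. ''$f$ is the identity near $-\infty$'' means there is $c\in\mathbb{R}$ with $f(t)=t$ for all $t\le c$. The hypothesis $\sup_t|f(t)-t|=\infty$ is equivalent to $[f]\neq[\mathrm{id}]$ in the group $QI(\mathbb{R})$ of quasi-isometries modulo bounded distance. *)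

From Stdlib Require Import Reals.
Open Scope R_scope.

Definition piecewise_linear (f : R -> R) : Prop :=
  forall a b : R, a < b ->
    exists (n : nat) (x : nat -> R),
      x 0%nat = a /\ x n = b /\
      (forall i : nat, (i < n)%nat -> x i < x (S i)) /\
      (forall i : nat, (i < n)%nat ->
         exists s c : R, forall t : R, x i <= t <= x (S i) -> f t = s * t + c).

Definition homeo_with_inverse (f g : R -> R) : Prop :=
  continuity f /\ continuity g /\
  (forall x, g (f x) = x) /\ (forall y, f (g y) = y).

(* Bounded set of slopes: Lambda(f) = {f'(t) : t not a break point}, i.e. the
   derivatives of f at the points where f is differentiable. *)
Definition bounded_slopes (f : R -> R) : Prop :=
  exists M : R, 1 < M /\
    forall t l : R, derivable_pt_lim f t l -> / M < Rabs l < M.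

Definition identity_near_minus_infty (f : R -> R) : Prop :=
  exists c : R, forall t : R, t <= c -> f t = t.

Definition in_Pplus (f g : R -> R) : Prop :=
  piecewise_linear f /\ homeo_with_inverse f g /\ f 0 = 0 /\
  bounded_slopes f /\ identity_near_minus_infty f.

From Stdlib Require Import Reals Lra Classical ClassicalEpsilon.
Open Scope R_scope.

(* Since [f^-1 (f t) - f t = -(f t - t)], an unbounded displacement [f t - t]
   is unbounded above for [f] or for [f^-1]; replacing [f] by [f^-1] if
   necessary we may assume the former.  As [f] is the identity near [-oo] and
   continuous, its displacement is bounded on every half-line [(-oo, T]], so
   it exceeds [T] at some point [t > T].  Choosing [b (n+1)] to be such a
   point for [T = max (b n, 3 f (b n), n+1)] gives the sequence. *)

Lemma cv_infty_of_INR_lt (u : nat -> R) : (forall n, INR n < u n) -> cv_infty u.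
Proof.
  intros Hu M.
  destruct (INR_unbounded M) as [N HN].
  exists N; intros n Hn.
  apply le_INR in Hn.
  specialize (Hu n); lra.
Qed.

Lemma escaping_sequence (g phi : R -> R) :
  (forall T, exists t, T < t /\ T < g t) ->
  exists b : nat -> R,
    (forall n, Rmax (b n) (phi (b n)) < b (S n)) /\
    cv_infty b /\ cv_infty (fun n => g (b n)).
Proof.
  intros Hg.
  destruct (choice _ Hg) as [F HF].
  set (next n x := Rmax (Rmax x (phi x)) (INR (S n))).
  set (b := fix b n := match n with
                       | O => F 0
                       | S m => F (next m (b m))
                       end).
  assert (Hbound : forall n, INR n < b n /\ INR n < g (b n)).
  { intros [|m]; [exact (HF 0)|].
    destruct (HF (next m (b m))) as [H1 H2].
    pose proof (Rmax_r (Rmax (b m) (phi (b m))) (INR (S m))).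
    fold next; simpl b; unfold next in *; lra. }
  exists b; split; [|split].
  - intro n.
    destruct (HF (next n (b n))) as [H _].
    pose proof (Rmax_l (Rmax (b n) (phi (b n))) (INR (S n))).
    simpl b; unfold next in *; lra.
  - apply cv_infty_of_INR_lt; intro n; apply Hbound.
  - apply cv_infty_of_INR_lt; intro n; apply Hbound.
Qed.

Lemma displacement_large_far_right (h : R -> R) (c : R) :
  continuity h -> (forall t, t <= c -> h t = t) ->
  (forall A, exists t, A < h t - t) ->
  forall T, exists t, T < t /\ T < h t - t.
Proof.
  intros Hh Hid Hunb T.
  set (d t := h t - t).
  assert (Hd : forall x, continuity_pt d x).
  { intro x; apply continuity_pt_minus; [apply Hh|].
    apply derivable_continuous_pt, derivable_pt_id. }
  destruct (continuity_ab_maj d (Rmin c T) T) as [Mx [HMx _]];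
    [apply Rmin_r | intros; apply Hd |].
  pose proof (Rmax_l T (Rmax (d Mx) 0)).
  pose proof (Rmax_r T (Rmax (d Mx) 0)).
  pose proof (Rmax_l (d Mx) 0).
  pose proof (Rmax_r (d Mx) 0).
  destruct (Hunb (Rmax T (Rmax (d Mx) 0))) as [t Ht].
  exists t; split; [|lra].
  destruct (Rle_or_lt t T) as [HtT|]; [exfalso|assumption].
  destruct (Rle_or_lt t c) as [Htc|Htc].
  - rewrite Hid in Ht by exact Htc; lra.
  - assert (d t <= d Mx) by (apply HMx; pose proof (Rmin_l c T); lra).
    fold (d t) in Ht; lra.
Qed.

Lemma displacement_sequence (h : R -> R) (c : R) :
  continuity h -> (forall t, t <= c -> h t = t) ->
  (forall A, exists t, A < h t - t) ->
  exists b : nat -> R, (forall n, b n < b (S n)) /\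
    cv_infty b /\ (forall n, b (S n) > 3 * h (b n)) /\
    cv_infty (fun n => h (b n) - b n).
Proof.
  intros Hh Hid Hunb.
  destruct (escaping_sequence (fun t => h t - t) (fun x => 3 * h x)
              (displacement_large_far_right h c Hh Hid Hunb))
    as [b [Hstep [Hb Hdisp]]].
  exists b; repeat split; trivial; intro n; specialize (Hstep n).
  - pose proof (Rmax_l (b n) (3 * h (b n))); lra.
  - pose proof (Rmax_r (b n) (3 * h (b n))); lra.
Qed.

Lemma inverse_identity_below (f g : R -> R) (c : R) :
  (forall x, g (f x) = x) -> (forall t, t <= c -> f t = t) ->
  forall t, t <= c -> g t = t.
Proof.
  intros Hgf Hid t Ht.
  rewrite <- (Hid t Ht) at 1; apply Hgf.
Qed.

Lemma displacement_unbounded_above (f g : R -> R) :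
  (forall x, g (f x) = x) ->
  ~ (exists C, forall t, Rabs (f t - t) <= C) ->
  (forall A, exists t, A < f t - t) \/ (forall A, exists s, A < g s - s).
Proof.
  intros Hgf Hunb.
  apply NNPP; intro Hbnd.
  apply not_or_and in Hbnd as [Hf Hg].
  apply not_all_ex_not in Hf as [A HA].
  apply not_all_ex_not in Hg as [B HB].
  apply Hunb; exists (Rmax A B); intro t.
  assert (f t - t <= A).
  { apply Rnot_lt_le; intro; apply HA; exists t; assumption. }
  assert (g (f t) - f t <= B).
  { apply Rnot_lt_le; intro; apply HB; exists (f t); assumption. }
  rewrite Hgf in *.
  pose proof (Rmax_l A B); pose proof (Rmax_r A B).
  apply Rabs_le; lra.
Qed.

Theorem lemma3p1 (f finv : R -> R) :
  in_Pplus f finv ->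
  ~ (exists C : R, forall t : R, Rabs (f t - t) <= C) ->
  exists b : nat -> R,
    ((forall n, b n < b (S n)) \/ (forall n, b (S n) < b n)) /\
    ((cv_infty b /\ (forall n, b (S n) > 3 * f (b n)) /\
        cv_infty (fun n => f (b n) - b n))
     \/
     (cv_infty b /\ (forall n, b (S n) > 3 * finv (b n)) /\
        cv_infty (fun n => finv (b n) - b n))).
Proof.
  intros [_ [[Hf [Hfinv [Hinv _]]] [_ [_ [c Hid]]]]] Hunb.
  destruct (displacement_unbounded_above f finv Hinv Hunb) as [Hup|Hup].
  - destruct (displacement_sequence f c Hf Hid Hup) as [b [Hmono Hb]].
    exists b; split; [left|left]; assumption.
  - destruct (displacement_sequence finv c Hfinv
                (inverse_identity_below f finv c Hinv Hid) Hup)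
      as [b [Hmono Hb]].
    exists b; split; [left|right]; assumption.
Qed.
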